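(* Let $K$ and $K'$ be two non-degenerate CMIs, with $\mathrm{can}(\mathrm{pur}(K))=(C,\langle\mathbb I_K,\mathbb I_K,P_i,1\le i\le t\rangle)$. Let $K''=R_K^{K'}$ and $\mathrm{can}(\mathrm{pur}(K''))=(C'',\langle\mathbb I_{K''},\mathbb I_{K''},P''_j,1\le j\le r\rangle)$, and let $P=\bigcup_{i=1}^tP_i$, $P''=\bigcup_{j=1}^rP''_j$. If $K$ implies $K'$ and $R_K^{K'}\ne(\cdot,\langle\ \rangle)$, then $P''\subseteq P$.
   Context: Setting: $X_1,\dots,X_n$ jointly distributed discrete random variables with $H(X_i)<\infty$; distribution unspecified. $X_\alpha=(X_i,i\in\alpha)$, $X_\emptyset$ constant. A CMI is $K=(C,\langle Q_1,\dots,Q_k\rangle)$, $k\ge0$, $C\subseteq\{1,\dots,n\}$, $\langle\cdot\rangle$ an unordered multiset of subsets; valid (for a given distribution) if $\sum_iH(X_{Q_i}|X_C)-H(X_{Q_1},\dots,X_{Q_k}|X_C)=0$. Empty members may be deleted. Degenerate = valid for every distribution, written $(\cdot,\langle\ \rangle)$. ''$K$ implies $K'$'': for every joint distribution, if $K$ is valid then $K'$ is valid. $\mathrm{pur}(K)=(C,\langle Q_i\setminus C:Q_i\setminus C\ne\emptyset\rangle)$. For pure $K$: $\mathbb I_K$ = indices lying in at least two members of the collection if $k\ge2$, else $\emptyset$; $P_1,\dots,P_t$ the nonempty sets among $Q_i\setminus\mathbb I_K$; $\mathrm{can}(K)=(\cdot,\langle\ \rangle)$ if $k\le1$, $(C,\langle\mathbb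 I_K,\mathbb I_K\rangle)$ if $k\ge2,\mathbb I_K\ne\emptyset,t\le1$, $(C,\langle P_1..P_t\rangle)$ if $k\ge2,\mathbb I_K=\emptyset$, $(C,\langle\mathbb I_K,\mathbb I_K,P_1..P_t\rangle)$ if $k\ge2,\mathbb I_K\ne\emptyset,t\ge2$. For general $K$, $\mathbb I_K$ is the repeated-index set of $\mathrm{pur}(K)$; general-form notation omits the copies of $\mathbb I_K$ when empty and uses $t=0$ for $(C,\langle\mathbb I_K,\mathbb I_K\rangle)$. $R_K^{K'}$ (''$K'$ conditioning on $K$''): with $\mathrm{can}(\mathrm{pur}(K'))=(C',\langle\mathbb I_{K'},\mathbb I_{K'},P'_j,1\le j\le s\rangle)$, $D=\mathbb I_{K'}\setminus\mathbb I_K$ and $T_1,\dots,T_u$ the nonempty sets among $P'_j\setminus\mathbb I_K$: $R_K^{K'}=(\cdot,\langle\ \rangle)$ if $D=\emptyset,u\le1$; $(C'\setminus\mathbb I_K,\langle T_1..T_u\rangle)$ if $D=\emptyset,u\ge2$; $(C'\setminus\mathbb I_K,\langle D,D\rangle)$ if $D\ne\emptyset,u\le1$; $(C'\setminus\mathbb I_K,\langle D,D,T_1..T_u\rangle)$ if $D\ne\emptyset,u\ge2$. *)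

From HB Require Import structures.
From mathcomp Require Import all_boot all_order all_algebra.
From mathcomp Require Import all_classical all_reals all_analysis.
Set Implicit Arguments. Unset Strict Implicit. Unset Printing Implicit Defensive.
Import Order.TTheory GRing.Theory Num.Theory.
Local Open Scope ring_scope.

(* Every
   countable alphabet is encoded into nat, so an outcome is a function
   'I_n -> nat and the joint law is a probability mass function on these. *)

Definition outcome (n : nat) := {ffun 'I_n -> nat}.

(* the coordinates outside alpha are zeroed: proj alpha x encodes X_alpha *)
Definition proj n (alpha : {set 'I_n}) (x : outcome n) : outcome n :=
  [ffun i => if i \in alpha then x i else 0%N].

Section Entropy.
Variable R : realType.
Variable n : nat.
Variable p : outcome n -> R.

Definition marg (alpha : {set 'I_n}) (y : outcome n) : R :=
  fine (\esum_(x in [set x | proj alpha x = y]) (p x)%:E).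

Definition entropy (alpha : {set 'I_n}) : \bar R :=
  \esum_(y in range (proj alpha)) (- (marg alpha y * ln (marg alpha y)))%:E.

End Entropy.

Record dist (R : realType) (n : nat) := Dist {
  pmf : outcome n -> R;
  pmf_ge0 : forall x, 0 <= pmf x;
  pmf_sum1 : (\esum_(x in [set: outcome n]) (pmf x)%:E = 1)%E;
  pmf_fin_ent : forall i : 'I_n, (entropy pmf [set i] < +oo)%E
}.

Definition Hr (R : realType) n (p : dist R n) (alpha : {set 'I_n}) : R :=
  fine (entropy (pmf p) alpha).

Definition Hc (R : realType) n (p : dist R n) (alpha C : {set 'I_n}) : R :=
  Hr p (alpha :|: C) - Hr p C.

(* K = (C, <Q_1,...,Q_k>); the multiset is represented by a list *)
Definition cmi (n : nat) := ({set 'I_n} * seq {set 'I_n})%type.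

Definition bigU n (Qs : seq {set 'I_n}) : {set 'I_n} := \bigcup_(Q <- Qs) Q.

Definition valid (R : realType) n (p : dist R n) (K : cmi n) : Prop :=
  \sum_(Q <- K.2) Hc p Q K.1 - Hc p (bigU K.2) K.1 = 0.

Definition cmi_degenerate n (K : cmi n) : Prop :=
  forall (R : realType) (p : dist R n), valid p K.

Definition cmi_implies n (K K' : cmi n) : Prop :=
  forall (R : realType) (p : dist R n), valid p K -> valid p K'.

Definition pur n (K : cmi n) : cmi n :=
  (K.1, [seq Q :\: K.1 | Q <- K.2 & Q :\: K.1 != finset.set0]).

Definition rep n (Qs : seq {set 'I_n}) : {set 'I_n} :=
  if (2 <= size Qs)%N then [set i : 'I_n | (1 < count (fun Q : {set 'I_n} => i \in Q) Qs)%N]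
  else finset.set0.

Definition IK n (K : cmi n) : {set 'I_n} := rep (pur K).2.

(* general form (C, <I, I, P_1..P_t>), the copies of I omitted when I = set0 *)
Definition gform (n : nat) := ({set 'I_n} * {set 'I_n} * seq {set 'I_n})%type.

(* can of a pure CMI; None stands for (., < >) *)
Definition can n (K : cmi n) : option (gform n) :=
  let Qs := K.2 in
  if (size Qs <= 1)%N then None else
  let I := rep Qs in
  let Ps := [seq Q :\: I | Q <- Qs & Q :\: I != finset.set0] in
  if (I != finset.set0) && (size Ps <= 1)%N then Some (K.1, I, [::])
  else Some (K.1, I, Ps).

(* R_K^{K'}; None stands for (., < >) *)
Definition Rcond n (K K' : cmi n) : option (cmi n) :=
  match can (pur K') with
  | None => None
  | Some (C', I', Ps') =>
      let I := IK K in
      let D := I' :\: I in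
      let Ts := [seq P :\: I | P <- Ps' & P :\: I != finset.set0] in
      if D == finset.set0 then
        (if (size Ts <= 1)%N then None else Some (C' :\: I, Ts))
      else
        (if (size Ts <= 1)%N then Some (C' :\: I, [:: D; D])
         else Some (C' :\: I, [:: D, D & Ts]))
  end.

Definition Punion n (K : cmi n) : {set 'I_n} :=
  match can (pur K) with
  | Some (_, _, Ps) => bigU Ps
  | None => finset.set0
  end.

(* Suppose x lies in P'' but not in P.  Unwinding R_K^{K'} produces y such that
   x, y are outside I_K and outside the conditioning set of K', while at least
   two members of K' meet {x, y}.  Let X_x = X_y be one fair bit and let every
   other X_i be constant: then H(X_a | X_C) is ln 2 when a meets {x, y} and C
   does not, and 0 otherwise, so a CMI is valid iff its conditioning set meets
   {x, y} or at most one of its members does.  Since x, y are not in I_K and x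
   is not in P, K is valid for this distribution and K' is not. *)

From HB Require Import structures.
From mathcomp Require Import all_boot all_order all_algebra.
From mathcomp Require Import all_classical all_reals all_analysis.
From mathcomp Require Import fintype finset.
From mathcomp Require Import lra Rstruct.
Set Implicit Arguments. Unset Strict Implicit. Unset Printing Implicit Defensive.
Import Order.TTheory GRing.Theory Num.Theory.

Section Meets.
Variable n : nat.
Implicit Types (A B Q : {set 'I_n}) (s : seq {set 'I_n}) (x y : 'I_n).

Definition meets A Q := A :&: Q != set0.

Lemma meets_set1 x Q : meets [set x] Q = (x \in Q).
Proof. by rewrite /meets setI_eq0 disjoints1 negbK. Qed.

Lemma meetsUl A B Q : meets (A :|: B) Q = meets A Q || meets B Q.
Proof. by rewrite /meets setIUl setU_eq0 negb_and. Qed.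

Lemma meets_set2 x y Q : meets [set x; y] Q = (x \in Q) || (y \in Q).
Proof. by rewrite meetsUl !meets_set1. Qed.

Lemma meets0l Q : meets set0 Q = false.
Proof. by rewrite /meets set0I eqxx. Qed.

Lemma meets0r A : meets A set0 = false.
Proof. by rewrite /meets setI0 eqxx. Qed.

Lemma meetsUr A Q Q' : meets A (Q :|: Q') = meets A Q || meets A Q'.
Proof. by rewrite /meets setIUr setU_eq0 negb_and. Qed.

Lemma meetsSl A A' Q : A \subset A' -> meets A Q -> meets A' Q.
Proof. by move=> sAA'; apply: contra => /eqP AQ0; rewrite -subset0 -AQ0 setSI. Qed.

Lemma meetsDr A B Q : meets A (Q :\: B) = meets (A :\: B) Q.
Proof. by rewrite /meets setIDA setIDAC. Qed.

Lemma meets_bigU A s : meets A (bigU s) = has (meets A) s.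
Proof.
rewrite /bigU; elim: s => [|Q s IHs]; first by rewrite big_nil meets0r.
by rewrite big_cons /= -IHs /meets setIUr setU_eq0 negb_and.
Qed.

Lemma mem_bigU x s : (x \in bigU s) = has (fun Q => x \in Q) s.
Proof. by rewrite -meets_set1 meets_bigU; apply: eq_has => Q; rewrite meets_set1. Qed.

Definition strip B s := [seq Q :\: B | Q <- s & Q :\: B != set0].

Lemma count_meets_strip A B s :
  count (meets A) (strip B s) = count (meets (A :\: B)) s.
Proof.
rewrite /strip; elim: s => [|Q s IHs] //=; rewrite -meetsDr.
by case: (Q :\: B =P set0) => [->|_] /=; rewrite ?meets0r IHs.
Qed.

Lemma count_meets_strip_le A B s :
  count (meets A) (strip B s) <= count (meets A) s.
Proof.
by rewrite count_meets_strip; apply: sub_count => Q; apply: meetsSl; apply: subsetDl.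
Qed.

Lemma count_meets_strip_disjoint A B s : [disjoint A & B] ->
  count (meets A) (strip B s) = count (meets A) s.
Proof. by move/setDidPl; rewrite count_meets_strip => ->. Qed.

Lemma mem_bigU_strip x B s :
  (x \in bigU (strip B s)) = (x \notin B) && (x \in bigU s).
Proof.
rewrite -!meets_set1 !meets_bigU !has_count count_meets_strip meets_set1.
case: (boolP (x \in B)) => xB /=.
  have /eqP-> : [set x] :\: B == set0 by rewrite setD_eq0 sub1set.
  by rewrite (eq_count (a2 := pred0)) ?count_pred0 // => Q; apply: meets0l.
by rewrite (setDidPl _) // disjoints1.
Qed.

Lemma strip_neq0 B s T : T \in strip B s -> T != set0.
Proof. by case/mapP => Q; rewrite mem_filter => /andP[nzQ _] ->. Qed.

Lemma disjoint_meets A B : [disjoint A & B] = ~~ meets A B.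
Proof. by rewrite /meets negbK setI_eq0. Qed.

Lemma mem_rep x s : (x \in rep s) = (1 < size s) && (1 < count (meets [set x]) s).
Proof. by rewrite /rep (eq_count (meets_set1 x)); case: ifP; rewrite inE. Qed.

Lemma count_le1_notin_rep x s :
  1 < size s -> x \notin rep s -> count (meets [set x]) s <= 1.
Proof. by rewrite mem_rep => -> /=; rewrite -leqNgt. Qed.

Lemma exists_pair_meets_twice s x :
    (forall T, T \in s -> T != set0) -> 1 < size s ->
    count (meets [set x]) s <= 1 -> x \in bigU s ->
  exists2 y, y \in bigU s & 1 < count (meets [set x; y]) s.
Proof.
move=> s_nz s_big cx xs.
have [T Ts xNT] : exists2 T, T \in s & ~~ meets [set x] T.
  apply/hasP; rewrite has_count -(ltn_add2l (count (meets [set x]) s)) addn0.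
  by rewrite count_predC (leq_ltn_trans cx s_big).
have /set0Pn[y yT] := s_nz T Ts.
exists y; first by rewrite mem_bigU; apply/hasP; exists T.
set a := meets [set x]; set b := predD (meets [set y]) a.
have hx : 0 < count a s by rewrite -has_count -meets_bigU meets_set1.
have hy : 0 < count b s.
  rewrite -has_count; apply/hasP; exists T => //.
  by rewrite /b /a /= xNT meets_set1.
have ab0 : count (predI a b) s = 0.
  by rewrite (eq_count (a2 := pred0)) ?count_pred0 // => Q /=; case: (a Q).
have := count_predUI a b s; rewrite ab0 addn0 => countU.
apply: leq_trans (leq_add hx hy) _; rewrite -countU.
by apply: sub_count => Q; rewrite /b /a /= meets_set2 !meets_set1; case: (x \in Q).
Qed.

End Meets.

Section FiniteSupport.
Variables (R : realType) (T : choiceType).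
Local Open Scope ring_scope.

Lemma esum_finite_support (S : set T) (s : seq T) (a : T -> \bar R) :
    uniq s -> (forall t, 0 <= a t)%E -> (forall t, t \notin s -> a t = 0%E) ->
  \esum_(t in S) a t = (\sum_(t <- s | t \in S) a t)%E.
Proof.
move=> us a_ge0 a_out.
rewrite esum_mkcond (esumID [set` s]); last by move=> t _; case: ifP.
rewrite [X in (_ + X)%E]esum1 ?adde0; last by move=> t [_ /negP/a_out->]; case: ifP.
rewrite classical_sets.setTI esum_fset // => [|t _]; last by case: ifP.
by rewrite -fsbig_seq // -big_mkcond.
Qed.

Lemma in_fiber (U : eqType) (f : T -> U) u w :
  (u \in [set x | f x = w]%classic) = (f u == w).
Proof. by apply/idP/eqP => [/set_mem|/mem_set]. Qed.

Lemma esum_point (S : set T) (u : T) (c : R) : 0 <= c ->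
  \esum_(t in S) (c * (t == u)%:R)%:E = (c * (u \in S)%:R)%:E.
Proof.
move=> c_ge0; rewrite (@esum_finite_support _ [:: u]) //.
- by rewrite big_mkcond big_seq1 eqxx; case: (u \in S); rewrite ?mulr1 ?mulr0.
- by move=> t; rewrite lee_fin mulr_ge0.
- by move=> t; rewrite inE => /negbTE->; rewrite mulr0.
Qed.

End FiniteSupport.

Section SharedCoin.
Variables (R : realType) (n : nat) (A : {set 'I_n}).
Local Open Scope ring_scope.

Lemma half_add_half : 2^-1 + 2^-1 = 1 :> R.
Proof. by rewrite [RHS]splitr mul1r. Qed.

Lemma neg_mul_ln_ge0 (m : R) : 0 <= m <= 1 -> 0 <= - (m * ln m).
Proof. by case/andP => m_ge0 m_le1; rewrite oppr_ge0 mulr_ge0_le0 // ln_le0. Qed.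

Definition ind_outcome (B : {set 'I_n}) : outcome n := [ffun i => nat_of_bool (i \in B)].

Lemma proj_ind a B : proj a (ind_outcome B) = ind_outcome (a :&: B).
Proof. by apply/ffunP => i; rewrite !ffunE inE; case: (i \in a). Qed.

Lemma ind_outcome_inj : injective ind_outcome.
Proof.
move=> B B' /ffunP eqBB'; apply/setP => i; move: (eqBB' i); rewrite !ffunE.
by case: (i \in B); case: (i \in B').
Qed.

Definition coin_pmf (z : outcome n) : R :=
  2^-1 * (z == ind_outcome set0)%:R + 2^-1 * (z == ind_outcome A)%:R.

Lemma coin_pmf_ge0 z : 0 <= coin_pmf z.
Proof. by rewrite addr_ge0 // mulr_ge0. Qed.

Lemma esum_coin_pmf (S : set (outcome n)) : \esum_(z in S) (coin_pmf z)%:E =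
  (2^-1 * (ind_outcome set0 \in S)%:R + 2^-1 * (ind_outcome A \in S)%:R)%:E.
Proof.
by rewrite (eq_esum (fun z _ => EFinD _ _)) esumD ?esum_point // => z _; rewrite lee_fin mulr_ge0.
Qed.

Lemma marg_coin a w : marg coin_pmf a w =
  2^-1 * (w == ind_outcome set0)%:R + 2^-1 * (w == ind_outcome (a :&: A))%:R.
Proof.
by rewrite /marg esum_coin_pmf /= !in_fiber !proj_ind setI0 ![_ == w]eq_sym.
Qed.

Lemma marg_coin_bounds a w : 0 <= marg coin_pmf a w <= 1.
Proof.
by rewrite marg_coin; case: (_ == _); case: (_ == _); apply/andP; split=> /=; lra.
Qed.

Lemma esum_coin_pmf_setT : (\esum_(z in [set: outcome n]) (coin_pmf z)%:E = 1)%E.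
Proof. by rewrite esum_coin_pmf !classical_sets.in_setT -mulrDl half_add_half mulr1. Qed.

Lemma entropy_coin a : entropy coin_pmf a = ((meets A a)%:R * ln 2)%:E.
Proof.
rewrite /entropy; set w0 := ind_outcome set0; set w1 := ind_outcome (a :&: A).
case: (boolP (meets A a)) => [Aa|nAa] /=; last first.
  have w10 : w1 = w0.
    by move: nAa; rewrite /meets setIC negbK => /eqP; rewrite /w1 => ->.
  rewrite mul0r esum1 // => w _; rewrite marg_coin -/w1 w10 -mulrDl half_add_half mul1r.
  by case: (_ == _); rewrite /= ?ln1 ?mulr0 ?mul0r oppr0.
have w01 : w0 != w1.
  by apply/eqP => /ind_outcome_inj E; move: Aa; rewrite /meets setIC -E eqxx.
rewrite (@esum_finite_support _ _ _ [:: w0; w1]); first last.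
- move=> w; rewrite !inE negb_or => /andP[/negbTE w0N /negbTE w1N].
  by rewrite marg_coin w0N w1N /= !mulr0 addr0 mul0r oppr0.
- by move=> w; rewrite lee_fin neg_mul_ln_ge0 ?marg_coin_bounds.
- by rewrite /= inE w01.
have r0 : w0 \in range (proj a).
  by apply/mem_set; exists w0 => //; rewrite /w0 proj_ind setI0.
have r1 : w1 \in range (proj a).
  by apply/mem_set; exists (ind_outcome A) => //; rewrite proj_ind.
rewrite !big_cons big_nil r0 r1 !marg_coin eqxx (negbTE w01) eq_sym (negbTE w01) eqxx /=.
rewrite mulr1 mulr0 addr0 add0r adde0 -EFinD lnV ?posrE // mulrN opprK.
by rewrite -mulrDl half_add_half mul1r.
Qed.

Lemma entropy_coin_lt_pinfty a : (entropy coin_pmf a < +oo)%E.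
Proof. by rewrite entropy_coin ltry. Qed.

Definition coin_dist : dist R n :=
  Dist coin_pmf_ge0 esum_coin_pmf_setT (fun i => entropy_coin_lt_pinfty [set i]).

Lemma Hr_coin a : Hr coin_dist a = (meets A a)%:R * ln 2.
Proof. by rewrite /Hr /= entropy_coin. Qed.

Lemma Hc_coin Q C : ~~ meets A C -> Hc coin_dist Q C = (meets A Q)%:R * ln 2.
Proof. by move/negbTE => mAC; rewrite /Hc !Hr_coin meetsUr mAC orbF mul0r subr0. Qed.

Lemma Hc_coin_meets Q C : meets A C -> Hc coin_dist Q C = 0.
Proof. by move=> mAC; rewrite /Hc !Hr_coin meetsUr mAC orbT subrr. Qed.

Lemma valid_coin K :
  valid coin_dist K <-> meets A K.1 || (count (meets A) K.2 <= 1)%N.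
Proof.
rewrite /valid; case: (boolP (meets A K.1)) => /= mAC.
  by rewrite Hc_coin_meets // big1_seq ?subrr // => Q _; apply: Hc_coin_meets.
rewrite Hc_coin // meets_bigU (eq_big_seq _ (fun Q _ => Hc_coin Q mAC)) -big_distrl /=.
have -> : \sum_(Q <- K.2) (meets A Q)%:R = (count (meets A) K.2)%:R :> R.
  rewrite -natr_sum -sum1_count; congr _%:R.
  by rewrite [RHS]big_mkcond; apply: eq_bigr => Q _; case: meets.
have ln2_gt0 : 0 < ln (2 : R) by rewrite ln_gt0 // ltr1n.
rewrite -mulrBl; apply: iff_trans (rwP eqP) _.
rewrite mulf_eq0 (gt_eqF ln2_gt0) orbF subr_eq0 eqr_nat has_count.
by case: count => [|[|]].
Qed.

End SharedCoin.

Section CMI.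
Variable n : nat.
Implicit Types (K : cmi n) (C D : {set 'I_n}) (s : seq {set 'I_n}) (x y : 'I_n).

Lemma Punion_sub K : Punion K \subset bigU (pur K).2 :\: IK K.
Proof.
rewrite /Punion /IK /can; case: ifP => _; first exact: sub0set.
case: ifP => _; first by rewrite /bigU big_nil sub0set.
by apply/subsetP => x; rewrite mem_bigU_strip inE.
Qed.

Lemma Punion_subU K : Punion K \subset bigU K.2.
Proof.
apply/subsetP => x /(subsetP (Punion_sub K)).
by rewrite inE mem_bigU_strip => /and3P[].
Qed.

Lemma Punion_cons2 C D s : Punion (C, [:: D, D & s]) \subset bigU s.
Proof.
apply/subsetP => x /(subsetP (Punion_sub _)).
rewrite inE mem_bigU_strip /IK mem_rep => /and3P[xNrep xNC].
rewrite !mem_bigU /=; case: (boolP (x \in D)) => //= xD _.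
have cnt2 : 1 < count (meets [set x]) (strip C [:: D, D & s]).
  by rewrite count_meets_strip_disjoint ?disjoints1 //= meets_set1 xD.
by rewrite cnt2 (leq_trans cnt2 (count_size _ _)) in xNrep.
Qed.

Lemma can_Some K C I Ps : can K = Some (C, I, Ps) ->
  1 < size K.2 /\ (Ps = [::] \/ Ps = strip (rep K.2) K.2).
Proof.
by rewrite /can; case: leqP => // big; case: ifP => _ [_ _ <-]; split => //; [left|right].
Qed.

Lemma count_meets_pair_le1 K x y :
    x \notin IK K -> y \notin IK K -> x \notin Punion K -> ~~ meets [set x; y] K.1 ->
  count (meets [set x; y]) K.2 <= 1.
Proof.
rewrite /IK /Punion /can -disjoint_meets => xI yI + disjC.
rewrite -(count_meets_strip_disjoint _ disjC).
change (strip K.1 K.2) with (pur K).2; set Qs := (pur K).2 in xI yI *.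
case: leqP => [small _ | big]; first exact: leq_trans (count_size _ _) small.
have disjI : [disjoint [set x; y] & rep Qs] by rewrite disjoint_meets meets_set2 negb_or xI.
rewrite -(count_meets_strip_disjoint _ disjI).
case: ifP => [/andP[_ small] _ | _ xNPs]; first exact: leq_trans (count_size _ _) small.
have -> : count (meets [set x; y]) (strip (rep Qs) Qs) =
          count (meets [set y]) (strip (rep Qs) Qs).
  apply: eq_in_count => Q QPs; rewrite meets_set2 meets_set1.
  by move: xNPs; rewrite mem_bigU => /hasPn/(_ Q QPs)/negbTE->.
exact: leq_trans (count_meets_strip_le _ _ _) (count_le1_notin_rep big yI).
Qed.

Lemma Rcond_Punion K K' K'' x : Rcond K K' = Some K'' -> x \in Punion K'' ->
  exists C' I' Ps', [/\ can (pur K') = Some (C', I', Ps'),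
    1 < size (strip (IK K) Ps') & x \in bigU (strip (IK K) Ps')].
Proof.
rewrite /Rcond; case: (can (pur K')) => [[[C' I'] Ps']|] //.
change [seq P :\: IK K | P <- Ps' & P :\: IK K != set0] with (strip (IK K) Ps').
move=> RE xP.
suff [big xTs] : 1 < size (strip (IK K) Ps') /\ x \in bigU (strip (IK K) Ps').
  by exists C', I', Ps'.
move: RE; case: ifP => _; case: leqP => big; case=> // KE; rewrite -KE in xP.
- by split => //; apply: (subsetP (Punion_subU _) _ xP).
- by have := subsetP (Punion_cons2 _ _ [::]) x xP; rewrite /bigU big_nil inE.
- by split => //; apply: (subsetP (Punion_cons2 _ _ _) _ xP).
Qed.

Lemma Rcond_witness K K' K'' x : Rcond K K' = Some K'' -> x \in Punion K'' ->
  exists y, [/\ x \notin IK K, y \notin IK K, ~~ meets [set x; y] K'.1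
              & 1 < count (meets [set x; y]) K'.2].
Proof.
move=> /Rcond_Punion/[apply] -[C' [I' [Ps' [/can_Some[bigQs [->|->]] bigTs xTs]]]] //.
set Qs := (pur K').2 in bigQs bigTs xTs *.
set Ts := strip (IK K) (strip (rep Qs) Qs) in bigTs xTs *.
have notin_Ts z : z \in bigU Ts -> [/\ z \notin IK K, z \notin rep Qs & z \notin K'.1].
  by rewrite !mem_bigU_strip => /and4P[].
have cx : count (meets [set x]) Ts <= 1.
  have [_ xNrep _] := notin_Ts x xTs.
  apply: leq_trans (count_le1_notin_rep bigQs xNrep).
  exact: leq_trans (count_meets_strip_le _ _ _) (count_meets_strip_le _ _ _).
have [y yTs many] := exists_pair_meets_twice (@strip_neq0 _ _ _) bigTs cx xTs.
have [[xI _ xC] [yI _ yC]] := (notin_Ts x xTs, notin_Ts y yTs).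
exists y; split => //; first by rewrite meets_set2 negb_or xC.
by apply: leq_trans many _; do 3!apply: leq_trans (count_meets_strip_le _ _ _) _.
Qed.

End CMI.

Theorem mainTheorem8 (n : nat) (K K' : cmi n) :
  ~ cmi_degenerate K -> ~ cmi_degenerate K' -> cmi_implies K K' ->
  forall K'' : cmi n, Rcond K K' = Some K'' ->
  (Punion K'' \subset Punion K)%SET.
Proof.
move=> _ _ KK' K'' RE; apply/subsetP => x xP''; apply: contraT => xNP.
have [y [xI yI C'N many]] := Rcond_witness RE xP''.
pose p := coin_dist Rdefinitions.R [set x; y].
have validK : valid p K.
  by apply/valid_coin; case: (boolP (meets _ K.1)) => //= CN; apply: count_meets_pair_le1.
by move/valid_coin: (KK' _ p validK); rewrite (negbTE C'N) /= leqNgt many.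
Qed.
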